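(* Let $\{(\mathbf{x}_i,t_i,\delta_i)\}_{i=1}^n$ be a dataset with $\mathbf{x}_i\in\mathbb{R}^p$, $t_i\in\mathbb{R}$, $\delta_i\in\{0,1\}$, let $\mathbf{X}$ have rows $\mathbf{x}_i^T$ (entries $X_{kl}$), $R_i=\{j:t_j\ge t_i\}$, and $$\ell(\boldsymbol\beta)=\sum_{i=1}^n\delta_i\Big[\log\Big(\sum_{j\in R_i}e^{\mathbf{x}_j^T\boldsymbol\beta}\Big)-\mathbf{x}_i^T\boldsymbol\beta\Big].$$ Then for every $\boldsymbol\beta\in\mathbb{R}^p$ and every $l\in\{1,\dots,p\}$, $$0\le\frac{\partial^2\ell(\boldsymbol\beta)}{\partial\beta_l^2}\le\frac14\sum_{i=1}^n\delta_i\Big(\max_{k\in R_i}X_{kl}-\min_{k\in R_i}X_{kl}\Big)^2$$ and $$\Big|\frac{\partial^3\ell(\boldsymbol\beta)}{\partial\beta_l^3}\Big|\le\frac{1}{6\sqrt3}\sum_{i=1}^n\delta_i\Big|\max_{k\in R_i}X_{kl}-\min_{k\in R_i}X_{kl}\Big|^3.$$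
   Context: $\ell$ is the Cox negative log partial likelihood. Consequently the first and second order partial derivatives in each coordinate are Lipschitz with these constants (this is the paper's interpretation, not part of the claim). *)

From Stdlib Require Import Reals List Arith.
From Coquelicot Require Import Coquelicot.
Open Scope R_scope.

Definition rsum (m : nat) (f : nat -> R) : R :=
  fold_right Rplus 0 (map f (seq 0 m)).

Definition in_risk (t : nat -> R) (i j : nat) : bool :=
  if Rle_dec (t i) (t j) then true else false.

(* max / min of X_{k l} over k in R_i (k < n); R_i contains i, so we start
   the fold at X_{i l}. *)
Definition risk_max (n : nat) (X : nat -> nat -> R) (t : nat -> R) (i l : nat) : R :=
  fold_right (fun k acc => if in_risk t i k then Rmax (X k l) acc else acc)
    (X i l) (seq 0 n).
Definition risk_min (n : nat) (X : nat -> nat -> R) (t : nat -> R) (i l : nat) : R :=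
  fold_right (fun k acc => if in_risk t i k then Rmin (X k l) acc else acc)
    (X i l) (seq 0 n).

Definition b2R (b : bool) : R := if b then 1 else 0.

Definition xbeta (p : nat) (X : nat -> nat -> R) (beta : nat -> R) (j : nat) : R :=
  rsum p (fun k => X j k * beta k).

Definition cox_loss (n p : nat) (X : nat -> nat -> R) (t : nat -> R)
    (delta : nat -> bool) (beta : nat -> R) : R :=
  rsum n (fun i => b2R (delta i) *
    (ln (rsum n (fun j => if in_risk t i j then exp (xbeta p X beta j) else 0))
     - xbeta p X beta i)).

Definition upd (beta : nat -> R) (l : nat) (s : R) : nat -> R :=
  fun k => if Nat.eqb k l then s else beta k.

Definition partial_n (f : (nat -> R) -> R) (k l : nat) (beta : nat -> R) : R :=
  Derive_n (fun s => f (upd beta l s)) k (beta l).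

(** In coordinate [l], each summand of the Cox loss is, up to an affine
    function, the log-partition function [s |-> ln (sum_j c_j exp (s y_j))]
    of the risk set [R_i], with [y_j = X_jl].  Its second and third
    derivatives are the variance [V] and the third central moment [T] of the
    exponentially tilted weights on the values [y_j], [j] in [R_i], all of
    which lie in [[lo, hi] = [min X_kl, max X_kl]].  With [a = mu - lo] and
    [b = hi - mu], averaging the polynomials [(v - lo)(hi - v)],
    [(hi - v)(v - lo)^2] and [(hi - v)(v - mu + b/2)^2], which are
    nonnegative on [[lo, hi]], gives [V <= ab <= (a + b)^2/4], and
    [T <= ab(b - a)] if [b >= 2a], [T <= b^3/4] otherwise; maximising over
    [a + b = hi - lo] yields the constant [1/(6 sqrt 3)].  Reflecting
    [[lo, hi]] bounds [-T] in the same way. *)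
From Stdlib Require Import Reals List Lra Lia.
From Coquelicot Require Import Coquelicot.
Open Scope R_scope.

Lemma rsum_0 f : rsum 0 f = 0.
Proof. reflexivity. Qed.

Lemma rsum_S m f : rsum (S m) f = rsum m f + f m.
Proof.
  unfold rsum. rewrite seq_S, map_app, fold_right_app. simpl.
  generalize (f m). induction (map f (seq 0 m)) as [|a L IH]; intro r; simpl.
  - ring.
  - rewrite IH. ring.
Qed.

Lemma rsum_ext m f g : (forall j, (j < m)%nat -> f j = g j) -> rsum m f = rsum m g.
Proof.
  induction m as [|m IH]; intro H; [reflexivity|].
  rewrite !rsum_S, IH, H; auto.
Qed.

Lemma rsum_plus m f g : rsum m (fun j => f j + g j) = rsum m f + rsum m g.
Proof. induction m as [|m IH]; [rewrite !rsum_0; ring | rewrite !rsum_S, IH; ring]. Qed.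

Lemma rsum_scal m c f : c * rsum m f = rsum m (fun j => c * f j).
Proof. induction m as [|m IH]; [rewrite !rsum_0; ring | rewrite !rsum_S, <- IH; ring]. Qed.

Lemma rsum_nonneg m f : (forall j, (j < m)%nat -> 0 <= f j) -> 0 <= rsum m f.
Proof.
  induction m as [|m IH]; intro H; [rewrite rsum_0; lra|].
  rewrite rsum_S. assert (0 <= f m) by auto. assert (0 <= rsum m f) by auto. lra.
Qed.

Lemma rsum_pos m f : (forall j, (j < m)%nat -> 0 <= f j) ->
  (exists j, (j < m)%nat /\ 0 < f j) -> 0 < rsum m f.
Proof.
  induction m as [|m IH]; intros H [j [Hj Hfj]]; [lia|].
  rewrite rsum_S. assert (0 <= f m) by auto.
  destruct (Nat.eq_dec j m) as [->|Hne].
  - assert (0 <= rsum m f) by (apply rsum_nonneg; auto). lra.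
  - assert (0 < rsum m f) by (apply IH; [auto | exists j; split; [lia | exact Hfj]]). lra.
Qed.

Lemma rsum_le m f g : (forall j, (j < m)%nat -> f j <= g j) -> rsum m f <= rsum m g.
Proof.
  induction m as [|m IH]; intro H; [rewrite !rsum_0; lra|].
  rewrite !rsum_S. assert (f m <= g m) by auto. assert (rsum m f <= rsum m g) by auto. lra.
Qed.

Lemma rsum_abs m f : Rabs (rsum m f) <= rsum m (fun j => Rabs (f j)).
Proof.
  induction m as [|m IH]; [rewrite !rsum_0, Rabs_R0; lra|].
  rewrite !rsum_S. eapply Rle_trans; [apply Rabs_triang | lra].
Qed.

Lemma is_derive_rsum m (F : nat -> R -> R) (F' : nat -> R) x :
  (forall j, (j < m)%nat -> is_derive (F j) x (F' j)) ->
  is_derive (fun s => rsum m (fun j => F j s)) x (rsum m F').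
Proof.
  induction m as [|m IH]; intro H.
  - apply (is_derive_ext (fun _ => 0)); [reflexivity | exact (is_derive_const 0 x)].
  - apply (is_derive_ext (fun s => rsum m (fun j => F j s) + F m s)).
    { intro s; rewrite rsum_S; reflexivity. }
    rewrite rsum_S. exact (is_derive_plus _ _ x _ _ (IH (fun j Hj => H j ltac:(lia)))
                                          (H m ltac:(lia))).
Qed.

Lemma Derive_n_S_is_derive (f f' : R -> R) k x :
  (forall y, is_derive f y (f' y)) -> Derive_n f (S k) x = Derive_n f' k x.
Proof.
  intro Hf. rewrite <- Nat.add_1_r, <- Derive_n_comp.
  apply Derive_n_ext. intro y. apply is_derive_unique, Hf.
Qed.

Lemma sqrt3_bounds : 0 < sqrt 3 /\ sqrt 3 * sqrt 3 = 3 /\ sqrt 3 < 2.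
Proof.
  split; [apply sqrt_lt_R0; lra|]. split; [apply sqrt_sqrt; lra|].
  rewrite <- (sqrt_square 2) by lra. apply sqrt_lt_1; lra.
Qed.

Lemma cubic_envelope a b : 0 <= a -> 0 <= b ->
  6 * sqrt 3 * (a * b * (b - a)) <= (a + b) ^ 3.
Proof.
  intros Ha Hb. destruct sqrt3_bounds as [Hs0 [Hss Hs2]]. set (s := sqrt 3) in *.
  (* equality iff b - a = (a + b) / sqrt 3 *)
  assert (Hgap : 0 <= (s * (b - a) - (a + b)) ^ 2 * (s * (b - a) + 2 * (a + b)))
    by (apply Rmult_le_pos; [apply pow2_ge_0 | nra]).
  replace ((s * (b - a) - (a + b)) ^ 2 * (s * (b - a) + 2 * (a + b)))
    with (2 * ((a + b) ^ 3 - 6 * s * (a * b * (b - a))) + (s * s - 3) * s * (b - a) ^ 3)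
    in Hgap by ring.
  rewrite Hss in Hgap. lra.
Qed.

Lemma third_central_moment_bound a b V T : 0 <= a -> 0 <= b -> V <= a * b ->
  T <= (b - 2 * a) * V + a ^ 2 * b -> T <= b ^ 3 / 4 ->
  T <= / (6 * sqrt 3) * (a + b) ^ 3.
Proof.
  intros Ha Hb HV H1 H2. destruct sqrt3_bounds as [Hs0 [Hss Hs2]].
  apply (Rmult_le_reg_l (6 * sqrt 3)); [lra|].
  rewrite <- Rmult_assoc, Rinv_r, Rmult_1_l by lra.
  destruct (Rle_lt_dec (2 * a) b) as [Hc|Hc].
  - assert (T <= a * b * (b - a)) by nra.
    assert (Hs := cubic_envelope a b Ha Hb). nra.
  - assert ((3 * b / 2) ^ 3 <= (a + b) ^ 3) by (apply pow_incr; lra).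
    assert (0 <= b ^ 3) by (apply pow_le; lra). nra.
Qed.

Section WeightedMoments.

Variables (m : nat) (w y : nat -> R).

Definition wavg (g : R -> R) : R := rsum m (fun j => w j * g (y j)) / rsum m w.
Definition wmom (k : nat) : R := wavg (fun v => v ^ k).
Definition wvar : R := wmom 2 - wmom 1 ^ 2.
Definition wcentral3 : R := wmom 3 - 3 * wmom 1 * wmom 2 + 2 * wmom 1 ^ 3.

Hypothesis mass_pos : 0 < rsum m w.

Lemma wavg_ext g h : (forall v, g v = h v) -> wavg g = wavg h.
Proof. intro E. unfold wavg. f_equal. apply rsum_ext. intros; rewrite E; reflexivity. Qed.

Lemma wavg_cubic a0 a1 a2 a3 :
  wavg (fun v => a0 + a1 * v ^ 1 + a2 * v ^ 2 + a3 * v ^ 3)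
  = a0 + a1 * wmom 1 + a2 * wmom 2 + a3 * wmom 3.
Proof.
  unfold wmom, wavg.
  rewrite (rsum_ext m _ (fun j => a0 * w j + (a1 * (w j * y j ^ 1)
            + (a2 * (w j * y j ^ 2) + a3 * (w j * y j ^ 3)))))
    by (intros; ring).
  rewrite !rsum_plus, <- !rsum_scal. field. lra.
Qed.

Lemma wavg_central_cubic c0 c1 c2 c3 :
  let mu := wmom 1 in
  wavg (fun v => c0 + c1 * (v - mu) + c2 * (v - mu) ^ 2 + c3 * (v - mu) ^ 3)
  = c0 + c2 * wvar + c3 * wcentral3.
Proof.
  intro mu.
  rewrite (wavg_ext _ (fun v => (c0 - c1 * mu + c2 * mu ^ 2 - c3 * mu ^ 3)
             + (c1 - 2 * c2 * mu + 3 * c3 * mu ^ 2) * v ^ 1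
             + (c2 - 3 * c3 * mu) * v ^ 2 + c3 * v ^ 3))
    by (intro; ring).
  rewrite wavg_cubic. unfold wvar, wcentral3. fold mu. ring.
Qed.

Variables lo hi : R.
Hypothesis w_ge0 : forall j, (j < m)%nat -> 0 <= w j.
Hypothesis supp_range : forall j, (j < m)%nat -> w j <> 0 -> lo <= y j <= hi.

Lemma wavg_ge0 g : (forall v, lo <= v <= hi -> 0 <= g v) -> 0 <= wavg g.
Proof.
  intro Hg. unfold wavg. apply Rdiv_le_0_compat; [|exact mass_pos].
  apply rsum_nonneg. intros j Hj.
  destruct (Req_dec (w j) 0) as [E|E]; [rewrite E; lra|].
  apply Rmult_le_pos; auto.
Qed.

Lemma central_cubic_test c0 c1 c2 c3 :
  (forall v, lo <= v <= hi -> 0 <= c0 + c1 * (v - wmom 1) + c2 * (v - wmom 1) ^ 2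
                                  + c3 * (v - wmom 1) ^ 3) ->
  0 <= c0 + c2 * wvar + c3 * wcentral3.
Proof. intro H. rewrite <- (wavg_central_cubic c0 c1 c2 c3). now apply wavg_ge0. Qed.

Lemma central_moment_constraints :
  let a := wmom 1 - lo in let b := hi - wmom 1 in
  0 <= a /\ 0 <= b /\ 0 <= wvar /\ wvar <= a * b /\
  wcentral3 <= (b - 2 * a) * wvar + a ^ 2 * b /\ wcentral3 <= b ^ 3 / 4 /\
  - wcentral3 <= (a - 2 * b) * wvar + b ^ 2 * a /\ - wcentral3 <= a ^ 3 / 4.
Proof.
  intros a b.
  assert (Ha := central_cubic_test a 1 0 0 ltac:(intros; unfold a; lra)).
  assert (Hb := central_cubic_test b (-1) 0 0 ltac:(intros; unfold b; lra)).
  assert (HV := central_cubic_test 0 0 1 0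
               ltac:(intros v _; assert (0 <= (v - wmom 1) ^ 2) by apply pow2_ge_0; nra)).
  assert (Hab := central_cubic_test (a * b) (b - a) (-1) 0
                   ltac:(intros v Hv; replace (_ + _) with ((v - lo) * (hi - v))
                          by (unfold a, b; ring); apply Rmult_le_pos; lra)).
  assert (H2 := central_cubic_test (a ^ 2 * b) (2 * a * b - a ^ 2) (b - 2 * a) (-1)
                  ltac:(intros v Hv; replace (_ + _) with ((hi - v) * (v - lo) ^ 2)
                         by (unfold a, b; ring);
                       apply Rmult_le_pos; [lra | apply pow2_ge_0])).
  assert (H3 := central_cubic_test (b ^ 3 / 4) (3 * b ^ 2 / 4) 0 (-1)
                  ltac:(intros v Hv; replace (_ + _) with ((hi - v) * (v - wmom 1 + b / 2) ^ 2)
                         by (unfold b; field);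
                       apply Rmult_le_pos; [lra | apply pow2_ge_0])).
  assert (H4 := central_cubic_test (a * b ^ 2) (b ^ 2 - 2 * a * b) (a - 2 * b) 1
                  ltac:(intros v Hv; replace (_ + _) with ((v - lo) * (hi - v) ^ 2)
                         by (unfold a, b; ring);
                       apply Rmult_le_pos; [lra | apply pow2_ge_0])).
  assert (H5 := central_cubic_test (a ^ 3 / 4) (- (3 * a ^ 2 / 4)) 0 1
                  ltac:(intros v Hv; replace (_ + _) with ((v - lo) * (v - wmom 1 - a / 2) ^ 2)
                         by (unfold a; field);
                       apply Rmult_le_pos; [lra | apply pow2_ge_0])).
  repeat split; lra.
Qed.

Lemma wvar_bounds : 0 <= wvar /\ wvar <= / 4 * (hi - lo) ^ 2.
Proof.
  destruct central_moment_constraints as [Ha [Hb [HV0 [HV _]]]].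
  set (a := wmom 1 - lo) in *. set (b := hi - wmom 1) in *.
  replace (hi - lo) with (a + b) by (unfold a, b; ring).
  assert (0 <= (a - b) ^ 2) by apply pow2_ge_0.
  split; nra.
Qed.

Lemma wcentral3_bound :
  Rabs wcentral3 <= / (6 * sqrt 3) * Rabs (hi - lo) ^ 3.
Proof.
  destruct central_moment_constraints as [Ha [Hb [_ [HV [H2 [H3 [H4 H5]]]]]]].
  set (a := wmom 1 - lo) in *. set (b := hi - wmom 1) in *.
  replace (hi - lo) with (a + b) by (unfold a, b; ring).
  rewrite (Rabs_pos_eq (a + b)) by lra.
  apply Rabs_le. split.
  - assert (- wcentral3 <= / (6 * sqrt 3) * (b + a) ^ 3)
      by (apply (third_central_moment_bound b a wvar); lra).
    replace (b + a) with (a + b) in * by ring. lra.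
  - now apply (third_central_moment_bound a b wvar).
Qed.

End WeightedMoments.

Section Tilting.

Variables (m : nat) (c y : nat -> R).

Definition tilt (s : R) (j : nat) : R := c j * exp (s * y j).
Definition log_partition (s : R) : R := ln (rsum m (tilt s)).

Lemma is_derive_tilt_mom k s :
  is_derive (fun s => rsum m (fun j => tilt s j * y j ^ k)) s
    (rsum m (fun j => tilt s j * y j ^ S k)).
Proof.
  apply is_derive_rsum. intros j _. unfold tilt. auto_derive; [exact I | simpl; ring].
Qed.

Lemma rsum_tilt_pow0 s : rsum m (tilt s) = rsum m (fun j => tilt s j * y j ^ 0).
Proof. apply rsum_ext. intros; simpl; ring. Qed.

Hypothesis c_ge0 : forall j, (j < m)%nat -> 0 <= c j.
Hypothesis c_pos : exists j, (j < m)%nat /\ 0 < c j.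

Lemma tilt_ge0 s j : (j < m)%nat -> 0 <= tilt s j.
Proof. intro Hj. unfold tilt. apply Rmult_le_pos; [auto | left; apply exp_pos]. Qed.

Lemma tilt_mass_pos s : 0 < rsum m (tilt s).
Proof.
  apply rsum_pos; [exact (tilt_ge0 s)|].
  destruct c_pos as [j [Hj Hcj]]. exists j. split; [exact Hj|].
  apply Rmult_lt_0_compat; [exact Hcj | apply exp_pos].
Qed.

Lemma is_derive_log_partition s : is_derive log_partition s (wmom m (tilt s) y 1).
Proof.
  assert (Hpos := tilt_mass_pos s).
  apply (is_derive_ext (fun s => ln (rsum m (fun j => tilt s j * y j ^ 0)))).
  { intro; unfold log_partition; rewrite rsum_tilt_pow0; reflexivity. }
  replace (wmom m (tilt s) y 1)
    with (rsum m (fun j => tilt s j * y j ^ 1) * / rsum m (fun j => tilt s j * y j ^ 0))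
    by (unfold wmom, wavg; rewrite <- rsum_tilt_pow0; reflexivity).
  apply (is_derive_comp ln); [|apply is_derive_tilt_mom].
  apply is_derive_ln. now rewrite <- rsum_tilt_pow0.
Qed.

Lemma is_derive_wmom_tilt k s :
  is_derive (fun s => wmom m (tilt s) y k) s
    (wmom m (tilt s) y (S k) - wmom m (tilt s) y k * wmom m (tilt s) y 1).
Proof.
  assert (Hpos := tilt_mass_pos s). rewrite rsum_tilt_pow0 in Hpos.
  apply (is_derive_ext (fun s => rsum m (fun j => tilt s j * y j ^ k)
                                 / rsum m (fun j => tilt s j * y j ^ 0))).
  { intro; unfold wmom, wavg; rewrite <- rsum_tilt_pow0; reflexivity. }
  assert (H := is_derive_div _ _ s _ _ (is_derive_tilt_mom k s) (is_derive_tilt_mom 0 s)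
                 ltac:(lra)).
  unfold wmom, wavg. cbv beta. rewrite (rsum_tilt_pow0 s).
  match goal with H : is_derive _ _ ?d |- is_derive _ _ ?e => replace e with d end.
  - exact H.
  - field. lra.
Qed.

Lemma is_derive_tilted_mean s :
  is_derive (fun s => wmom m (tilt s) y 1) s (wvar m (tilt s) y).
Proof.
  unfold wvar. replace (wmom m (tilt s) y 1 ^ 2)
    with (wmom m (tilt s) y 1 * wmom m (tilt s) y 1) by ring.
  apply is_derive_wmom_tilt.
Qed.

Lemma is_derive_tilted_var s :
  is_derive (fun s => wvar m (tilt s) y) s (wcentral3 m (tilt s) y).
Proof.
  assert (H := is_derive_minus _ _ s _ _ (is_derive_wmom_tilt 2 s)
                 (is_derive_pow _ 2 s _ (is_derive_wmom_tilt 1 s))).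
  unfold wvar, wcentral3. simpl in H.
  match goal with H : is_derive _ _ ?d |- is_derive _ _ ?e => replace e with d end.
  - exact H.
  - unfold minus, plus, opp; simpl. ring.
Qed.

Variables lo hi : R.
Hypothesis supp_range : forall j, (j < m)%nat -> c j <> 0 -> lo <= y j <= hi.

Lemma tilt_supp_range s j : (j < m)%nat -> tilt s j <> 0 -> lo <= y j <= hi.
Proof.
  intros Hj Hne. apply supp_range; [exact Hj|].
  intro E. apply Hne. unfold tilt. rewrite E. ring.
Qed.

Lemma tilted_var_bounds s :
  0 <= wvar m (tilt s) y /\ wvar m (tilt s) y <= / 4 * (hi - lo) ^ 2.
Proof.
  exact (wvar_bounds m (tilt s) y (tilt_mass_pos s) lo hi (tilt_ge0 s) (tilt_supp_range s)).
Qed.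

Lemma tilted_central3_bound s :
  Rabs (wcentral3 m (tilt s) y) <= / (6 * sqrt 3) * Rabs (hi - lo) ^ 3.
Proof.
  exact (wcentral3_bound m (tilt s) y (tilt_mass_pos s) lo hi
           (tilt_ge0 s) (tilt_supp_range s)).
Qed.

End Tilting.

Lemma xbeta_upd p X beta l s j : (l < p)%nat ->
  xbeta p X (upd beta l s) j = xbeta p X beta j + X j l * (s - beta l).
Proof.
  unfold xbeta. induction p as [|p IH]; intro Hl; [lia|].
  rewrite !rsum_S. unfold upd at 2.
  destruct (Nat.eq_dec l p) as [->|Hne].
  - rewrite Nat.eqb_refl.
    rewrite (rsum_ext p _ (fun k => X j k * beta k)); [ring|].
    intros k Hk. unfold upd. replace (Nat.eqb k p) with false; [reflexivity|].
    symmetry. apply Nat.eqb_neq. lia.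
  - replace (Nat.eqb p l) with false by (symmetry; apply Nat.eqb_neq; lia).
    rewrite IH by lia. ring.
Qed.

Lemma risk_range n X t i l j : (j < n)%nat -> in_risk t i j = true ->
  risk_min n X t i l <= X j l <= risk_max n X t i l.
Proof.
  intros Hj Hr. unfold risk_min, risk_max.
  assert (Hin : In j (seq 0 n)) by (apply in_seq; lia).
  induction (seq 0 n) as [|k L IH]; simpl in *; [contradiction|].
  destruct Hin as [->|Hin].
  - rewrite Hr. split; [apply Rmin_l | apply Rmax_l].
  - specialize (IH Hin). destruct (in_risk t i k); [|exact IH].
    split; [eapply Rle_trans; [apply Rmin_r | apply IH]
           |eapply Rle_trans; [apply IH | apply Rmax_r]].
Qed.

Lemma b2R_ge0 b : 0 <= b2R b.
Proof. destruct b; simpl; lra. Qed.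

Section CoxCoordinate.

Variables (n p : nat) (X : nat -> nat -> R) (t : nat -> R) (delta : nat -> bool)
  (beta : nat -> R) (l : nat).
Hypothesis l_lt_p : (l < p)%nat.

Definition risk_weight (i j : nat) : R :=
  if in_risk t i j then exp (xbeta p X beta j - X j l * beta l) else 0.

Local Notation col := (fun j : nat => X j l).
Local Notation tilted i s := (tilt (risk_weight i) col s).

Lemma risk_weight_ge0 i j : 0 <= risk_weight i j.
Proof. unfold risk_weight. destruct (in_risk t i j); [left; apply exp_pos | lra]. Qed.

Lemma risk_weight_exists_pos i : (i < n)%nat -> exists j, (j < n)%nat /\ 0 < risk_weight i j.
Proof.
  intro Hi. exists i. split; [exact Hi|].
  unfold risk_weight, in_risk. destruct (Rle_dec (t i) (t i)); [apply exp_pos | lra].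
Qed.

Lemma risk_weight_supp i j : (j < n)%nat -> risk_weight i j <> 0 ->
  risk_min n X t i l <= X j l <= risk_max n X t i l.
Proof.
  intros Hj Hne. apply risk_range; [exact Hj|].
  unfold risk_weight in Hne. destruct (in_risk t i j); [reflexivity | lra].
Qed.

Lemma cox_loss_upd s :
  cox_loss n p X t delta (upd beta l s) =
  rsum n (fun i => b2R (delta i) *
    (log_partition n (risk_weight i) col s - (xbeta p X beta i + X i l * (s - beta l)))).
Proof.
  unfold cox_loss, log_partition. apply rsum_ext. intros i _.
  rewrite xbeta_upd by exact l_lt_p. do 3 f_equal.
  apply rsum_ext. intros j _. unfold tilt, risk_weight.
  rewrite xbeta_upd by exact l_lt_p.
  destruct (in_risk t i j); [rewrite <- exp_plus; f_equal; ring | ring].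
Qed.

Lemma is_derive_cox_loss_upd s :
  is_derive (fun s => cox_loss n p X t delta (upd beta l s)) s
    (rsum n (fun i => b2R (delta i) * (wmom n (tilted i s) col 1 - X i l))).
Proof.
  apply (is_derive_ext _ _ s _ (fun s => eq_sym (cox_loss_upd s))).
  apply is_derive_rsum. intros i Hi. apply is_derive_scal.
  apply (is_derive_minus (V := R_NormedModule)).
  - apply is_derive_log_partition; [intros; apply risk_weight_ge0 | now apply risk_weight_exists_pos].
  - auto_derive; [exact I | ring].
Qed.

Lemma is_derive_cox_mean_sum s :
  is_derive (fun s => rsum n (fun i => b2R (delta i) * (wmom n (tilted i s) col 1 - X i l)))
    s (rsum n (fun i => b2R (delta i) * wvar n (tilted i s) col)).
Proof.
  apply is_derive_rsum. intros i Hi. apply is_derive_scal.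
  replace (wvar _ _ _) with (wvar n (tilted i s) col - 0) by ring.
  apply (is_derive_minus (V := R_NormedModule)); [|exact (is_derive_const (X i l) s)].
  apply is_derive_tilted_mean; [intros; apply risk_weight_ge0 | now apply risk_weight_exists_pos].
Qed.

Lemma is_derive_cox_var_sum s :
  is_derive (fun s => rsum n (fun i => b2R (delta i) * wvar n (tilted i s) col))
    s (rsum n (fun i => b2R (delta i) * wcentral3 n (tilted i s) col)).
Proof.
  apply is_derive_rsum. intros i Hi. apply is_derive_scal.
  apply is_derive_tilted_var; [intros; apply risk_weight_ge0 | now apply risk_weight_exists_pos].
Qed.

Lemma partial2_cox_loss :
  partial_n (cox_loss n p X t delta) 2 l beta =
  rsum n (fun i => b2R (delta i) * wvar n (tilted i (beta l)) col).
Proof.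
  unfold partial_n.
  rewrite (Derive_n_S_is_derive _ _ 1 _ is_derive_cox_loss_upd).
  exact (Derive_n_S_is_derive _ _ 0 _ is_derive_cox_mean_sum).
Qed.

Lemma partial3_cox_loss :
  partial_n (cox_loss n p X t delta) 3 l beta =
  rsum n (fun i => b2R (delta i) * wcentral3 n (tilted i (beta l)) col).
Proof.
  unfold partial_n.
  rewrite (Derive_n_S_is_derive _ _ 2 _ is_derive_cox_loss_upd).
  rewrite (Derive_n_S_is_derive _ _ 1 _ is_derive_cox_mean_sum).
  exact (Derive_n_S_is_derive _ _ 0 _ is_derive_cox_var_sum).
Qed.

Lemma risk_tilted_var_bounds i s : (i < n)%nat ->
  0 <= wvar n (tilted i s) col /\
  wvar n (tilted i s) col <= / 4 * (risk_max n X t i l - risk_min n X t i l) ^ 2.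
Proof.
  intro Hi. apply tilted_var_bounds;
    [intros; apply risk_weight_ge0 | now apply risk_weight_exists_pos | apply risk_weight_supp].
Qed.

Lemma risk_tilted_central3_bound i s : (i < n)%nat ->
  Rabs (wcentral3 n (tilted i s) col)
  <= / (6 * sqrt 3) * Rabs (risk_max n X t i l - risk_min n X t i l) ^ 3.
Proof.
  intro Hi. apply tilted_central3_bound;
    [intros; apply risk_weight_ge0 | now apply risk_weight_exists_pos | apply risk_weight_supp].
Qed.

End CoxCoordinate.

Theorem theorem2 (n p : nat) (X : nat -> nat -> R) (t : nat -> R)
    (delta : nat -> bool) (beta : nat -> R) (l : nat) :
  (l < p)%nat ->
  (0 <= partial_n (cox_loss n p X t delta) 2 l beta
   /\ partial_n (cox_loss n p X t delta) 2 l beta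
      <= / 4 * rsum n (fun i => b2R (delta i) *
                 (risk_max n X t i l - risk_min n X t i l) ^ 2))
  /\ Rabs (partial_n (cox_loss n p X t delta) 3 l beta)
      <= / (6 * sqrt 3) * rsum n (fun i => b2R (delta i) *
                 Rabs (risk_max n X t i l - risk_min n X t i l) ^ 3).
Proof.
  intro Hl.
  rewrite (partial2_cox_loss n p X t delta beta l Hl),
          (partial3_cox_loss n p X t delta beta l Hl).
  split; [split|].
  - apply rsum_nonneg. intros i Hi.
    apply Rmult_le_pos; [apply b2R_ge0 | apply risk_tilted_var_bounds, Hi].
  - rewrite rsum_scal. apply rsum_le. intros i Hi.
    rewrite (Rmult_comm (/ 4)), Rmult_assoc, (Rmult_comm _ (/ 4)).
    apply Rmult_le_compat_l; [apply b2R_ge0 | apply risk_tilted_var_bounds, Hi].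
  - eapply Rle_trans; [apply rsum_abs|].
    rewrite rsum_scal. apply rsum_le. intros i Hi.
    rewrite Rabs_mult, (Rabs_pos_eq _ (b2R_ge0 _)).
    rewrite (Rmult_comm (/ (6 * sqrt 3))), Rmult_assoc, (Rmult_comm _ (/ (6 * sqrt 3))).
    apply Rmult_le_compat_l; [apply b2R_ge0 | apply risk_tilted_central3_bound, Hi].
Qed.
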